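(* Let $v$ be a normalized, non-negative, submodular (not necessarily monotone) valuation, and run the deterministic mechanism BFM-VM described in the context with $\ell=2$ and $\alpha=1+\sqrt{3}$, with all sellers behaving truthfully. Then the output $S^*$ satisfies $$v(S^* )\ \ge\ \frac{v(O)}{12+4\sqrt{3}},$$ where $O$ is an optimal solution of $\max\{v(S): S\subseteq\mathcal{N},\ c(S)\le B\}$. Moreover, counting each evaluation of $v$ as one step, BFM-VM runs in $\mathcal{O}(n\log n)$ time.
   Context: Setting. $\mathcal{N}$ is a finite set of $n$ sellers. The valuation $v:2^{\mathcal{N}}\to\mathbb{R}_{\ge 0}$ satisfies $v(\emptyset)=0$ and is submodular (for $X\subseteq Y\subseteq\mathcal{N}$ and $u\notin Y$, $v(u\mid Y)\le v(u\mid X)$), where $v(S\mid T)=v(S\cup T)-v(T)$, $v(u\mid T)=v(\{u\}\mid T)$, $v(u)=v(\{u\})$. Each seller $u$ has a private cost $c(u)\ge 0$; $c(X)=\sum_{u\in X}c(u)$. $B>0$ is the budget, $[\ell]=\{1,\dots,\ell\}$. Sellers behave truthfully: a seller $u$ offered price $q$ accepts iff $c(u)\le q$. Mechanism BFM-VM (inputs $B$, $\alpha>1$, $\ell\in\{1,2\}$): 1. Offer every seller the price $B$; let $R$ be the set of sellers who accept, and set $p(u)=B$ for $u\in R$. 2. Set $t=1$, $\rho_1=\max_{u\in R}v(u)$, $S_{1,1}=\{u_0\}$ for some $u_0\in\arg\max_{u\in R}v(u)$, and (if $\ell=2$) $S_{2,1}=\emptyset$. 3. Repeat rounds: set $t\leftarrow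 t+1$, $\rho_t=\alpha\rho_{t-1}$, $S_{i,t}=\emptyset$ for $i\in[\ell]$. Process the sellers $u\in R\setminus\bigcup_{i=1}^{\ell}S_{i,t-1}$ one at a time in a fixed order. For each such $u$: pick $j\in\arg\max_{i\in[\ell]}v(u\mid S_{i,t})$ (current contents); update $p(u)\leftarrow\min\{p(u),\ v(u\mid S_{j,t})/(\rho_t/B)\}$ and offer $p(u)$ to $u$. If $u$ accepts: if $v(S_{j,t}\cup\{u\})>\rho_t$, end the round immediately; otherwise add $u$ to $S_{j,t}$. If $u$ rejects, remove $u$ from $R$. After the round, stop if $R\setminus\bigcup_{i=1}^{\ell}(S_{i,t-1}\cup S_{i,t})=\emptyset$; otherwise start another round. 4. Let $M$ be the final value of $t$. Output $S^*\in\arg\max_{A\in\{S_{i,t}: i\in[\ell],\ t\in\{M-1,M\}\}}v(A)$, paying each $u\in S^*$ its current price $p(u)$. *)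

From HB Require Import structures.
From mathcomp Require Import all_boot all_order all_algebra.
From mathcomp Require Import reals.
Set Implicit Arguments. Unset Strict Implicit. Unset Printing Implicit Defensive.
Import Order.TTheory GRing.Theory Num.Theory.
Local Open Scope ring_scope.

(* Sellers are 'I_n; the fixed processing order is the natural order of 'I_n
   (any fixed order is obtained by relabelling, v and c being arbitrary). *)

Section BFMVM.
Variables (R : realType) (n : nat).
Variables (v : {set 'I_n} -> R) (c : 'I_n -> R) (B : R).
(* u0 : the chosen maximiser of v({u}) over the accepting sellers (a hypothesis
   of the theorem); tie t u : tie-breaking rule for j in argmax_i v(u | S_{i,t})
   when both marginals are equal (true = choose j = 2). Since each seller is
   processed at most once per round, quantifying over all such functions covers
   all possible tie-breaking behaviours. *)
Variables (u0 : 'I_n) (tie : nat -> 'I_n -> bool).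

Definition submodular_val :=
  forall (X Y : {set 'I_n}) (u : 'I_n), X \subset Y -> u \notin Y ->
    v (u |: Y) - v Y <= v (u |: X) - v X.

Definition cost_of (S : {set 'I_n}) : R := \sum_(u in S) c u.

Definition marg (S : {set 'I_n}) (u : 'I_n) : R := v (u |: S) - v S.

Definition alpha : R := 1 + Num.sqrt 3.

Definition rho (t : nat) : R := alpha ^+ t.-1 * v [set u0].

Record rstate := RS {
  rR : {set 'I_n};
  rp : 'I_n -> R;
  rS1 : {set 'I_n};
  rS2 : {set 'I_n};
  rend : bool;            (* round ended early *)
  rcost : nat             (* number of evaluations of v so far *)
}.

(* processing seller u in round t; evaluates v(S1 ∪ u), v(S1), v(S2 ∪ u), v(S2)
   (4 evaluations; the test v(S_j ∪ {u}) > rho_t reuses one of them). *)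
Definition step (t : nat) (st : rstate) (u : 'I_n) : rstate :=
  if rend st then st else
  let m1 := marg (rS1 st) u in
  let m2 := marg (rS2 st) u in
  let j2 := (m1 < m2) || ((m1 == m2) && tie t u) in
  let Sj := if j2 then rS2 st else rS1 st in
  let mj := if j2 then m2 else m1 in
  let pu := Num.min (rp st u) (mj / (rho t / B)) in
  let p' := fun w => if w == u then pu else rp st w in
  let cost' := (rcost st + 4)%N in
  if c u <= pu then
    if rho t < v (u |: Sj) then RS (rR st) p' (rS1 st) (rS2 st) true cost'
    else if j2 then RS (rR st) p' (rS1 st) (u |: rS2 st) false cost'
    else RS (rR st) p' (u |: rS1 st) (rS2 st) false cost'
  else RS (rR st :\ u) p' (rS1 st) (rS2 st) false cost'.

(* state between rounds: after round t we store S_{i,t-1} (prev) and S_{i,t} (cur) *)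
Record mstate := MS {
  mR : {set 'I_n};
  mp : 'I_n -> R;
  mprev1 : {set 'I_n};
  mprev2 : {set 'I_n};
  mcur1 : {set 'I_n};
  mcur2 : {set 'I_n};
  mcost : nat
}.

Definition round (t : nat) (ms : mstate) : mstate :=
  let todo := [seq u <- enum 'I_n | u \in mR ms :\: (mcur1 ms :|: mcur2 ms)] in
  let st := foldl (step t) (RS (mR ms) (mp ms) set0 set0 false (mcost ms)) todo in
  MS (rR st) (rp st) (mcur1 ms) (mcur2 ms) (rS1 st) (rS2 st) (rcost st).

(* steps 1-2: offer B to everybody, R = accepting sellers, p = B,
   S_{1,1} = {u0}, S_{2,1} = ∅; computing rho_1 costs #|R| evaluations. *)
Definition init_state : mstate :=
  let R1 := [set u | c u <= B] in
  MS R1 (fun _ => B) set0 set0 [set u0] set0 #|R1|.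

(* state k = state after round k+1 *)
Fixpoint state (k : nat) : mstate :=
  match k with
  | 0 => init_state
  | k'.+1 => round k.+1 (state k')
  end.

(* stopping test after a round (only used for rounds t >= 2, i.e. k >= 1) *)
Definition stops (k : nat) : bool :=
  let ms := state k in
  mR ms :\: (mprev1 ms :|: mprev2 ms :|: mcur1 ms :|: mcur2 ms) == set0.

Definition better (A A' : {set 'I_n}) := if v A < v A' then A' else A.
Definition output (ms : mstate) : {set 'I_n} :=
  foldl better (mprev1 ms) [:: mprev2 ms; mcur1 ms; mcur2 ms].

(* total number of evaluations of v (4 more for the final argmax) *)
Definition total_cost (ms : mstate) : nat := (mcost ms + 4)%N.

End BFMVM.

From Pilot Require Import Defs.
From HB Require Import structures.
From mathcomp Require Import all_boot all_order all_algebra.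
From mathcomp Require Import reals.
From mathcomp Require Import ring lra zify.
Import Order.TTheory GRing.Theory Num.Theory.
Local Open Scope ring_scope.
Set Implicit Arguments. Unset Strict Implicit. Unset Printing Implicit Defensive.

(* Within a round every accepted seller joins the one of the two sets S1, S2 where
   its marginal value is larger, so the marginal values, over any superset of one
   set, of elements of the other set are paid for by the value of that other set.
   A seller rejected in round t had marginal value below c(u) rho_t / B against
   both sets, so the rejected part of a feasible set O adds at most rho_t c(O) / B
   to v(S1) + v(S2).  Splitting O by the round in which its elements were
   rejected, the early rounds contribute at most 2 rho_t each, a geometric sum
   dominated by the last thresholds, and the last two rounds are bounded by the
   four candidates, each worth at most the output value X.  Since an unfinished
   round overflows its threshold, rho_(M-1) < alpha X / (alpha - 1), and
   alpha = 1 + sqrt 3 gives v(O) <= (12 + 4 sqrt 3) X.  As no set is worth more than n rho_1 while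
   rho_t = alpha^(t-1) rho_1, there are O(log n) rounds of O(n) evaluations. *)

Section Submodular.
Variables (R : realFieldType) (T : finType) (v : {set T} -> R).
Hypothesis v0 : v set0 = 0.
Hypothesis v_ge0 : forall S, 0 <= v S.
Hypothesis v_submod : forall (X Y : {set T}) (u : T), X \subset Y -> u \notin Y ->
  v (u |: Y) - v Y <= v (u |: X) - v X.

Lemma submod_sum_le (S W : {set T}) :
  v (S :|: W) <= v S + \sum_(u in W) (v (u |: S) - v S).
Proof.
rewrite -{1}(set_enum W) -big_enum; have := enum_uniq W.
elim: (enum W) => [_|u s IH /= /andP [us uniq_s]].
  have -> : [set x in [::]] = set0 :> {set T} by apply/setP => x; rewrite !inE.
  by rewrite setU0 big_nil addr0.
have -> : S :|: [set x in u :: s] = u |: (S :|: [set x in s]).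
  by apply/setP => x; rewrite !inE orbCA.
rewrite big_cons; have IHs := IH uniq_s.
have [uS|uS] := boolP (u \in S).
  have -> : u |: (S :|: [set x in s]) = S :|: [set x in s].
    by apply/setUidPr; rewrite sub1set inE uS.
  have -> : u |: S = S by apply/setUidPr; rewrite sub1set.
  by rewrite subrr add0r.
have : v (u |: (S :|: [set x in s])) - v (S :|: [set x in s]) <= v (u |: S) - v S.
  by apply: v_submod; rewrite ?subsetUl // !inE negb_or uS us.
lra.
Qed.

Lemma submod_gain_antitone (X Y W : {set T}) : X \subset Y -> {in W, forall x, x \notin Y} ->
  v (Y :|: W) - v Y <= v (X :|: W) - v X.
Proof.
move=> XY; rewrite -(set_enum W); elim: (enum W) => [_|u s IH W_Y].
  have -> : [set x in [::]] = set0 :> {set T} by apply/setP => x; rewrite !inE.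
  by rewrite !setU0 !subrr.
have IHs : v (Y :|: [set x in s]) - v Y <= v (X :|: [set x in s]) - v X.
  by apply: IH => w; rewrite inE => ws; apply: W_Y; rewrite !inE ws orbT.
have uY : u \notin Y by apply: W_Y; rewrite !inE eqxx.
have E Z : Z :|: [set x in u :: s] = u |: (Z :|: [set x in s]).
  by apply/setP => x; rewrite !inE orbCA.
rewrite !E; have [us|us] := boolP (u \in s).
  have E' Z : u |: (Z :|: [set x in s]) = Z :|: [set x in s].
    by apply/setUidPr; rewrite sub1set !inE us orbT.
  by rewrite !E'.
have : v (u |: (Y :|: [set x in s])) - v (Y :|: [set x in s]) <=
       v (u |: (X :|: [set x in s])) - v (X :|: [set x in s]).
  by apply: v_submod; rewrite ?setSU // !inE negb_or uY us.
lra.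
Qed.

Lemma submod_lattice (P Q : {set T}) : v (P :|: Q) + v (P :&: Q) <= v P + v Q.
Proof.
have := @submod_gain_antitone (P :&: Q) P (Q :\: P) (subsetIl _ _).
have -> : P :|: Q :\: P = P :|: Q by rewrite setDE setUIr setUCr setIT.
have -> : P :&: Q :|: Q :\: P = Q.
  by apply/setP => x; rewrite !inE; case: (x \in P); case: (x \in Q).
move=> gain; suff : v (P :|: Q) - v P <= v Q - v (P :&: Q) by lra.
by apply: gain => x; rewrite !inE => /andP [/negbTE ->].
Qed.

Lemma submod_subadditive (P Q : {set T}) : v (P :|: Q) <= v P + v Q.
Proof. have := submod_lattice P Q; have := v_ge0 (P :&: Q); lra. Qed.

Lemma submod_le_split (O A A' : {set T}) : {in A, forall x, x \notin A'} ->
  v O <= v (O :|: A) + v (O :|: A').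
Proof.
move=> AA'; have := submod_lattice (O :|: A) (O :|: A').
have -> : (O :|: A) :&: (O :|: A') = O.
  apply/setP => x; rewrite !inE; have [xA|_] := boolP (x \in A).
    by rewrite (negbTE (AA' x xA)) orbT orbF.
  by rewrite orbF; case: (x \in O).
have := v_ge0 (O :|: A :|: (O :|: A')); lra.
Qed.

Lemma submod_le_card (S : {set T}) (r : R) : {in S, forall u, v [set u] <= r} ->
  v S <= r *+ #|S|.
Proof.
move=> Sr; have := submod_sum_le set0 S; rewrite set0U v0 add0r => /le_trans; apply.
rewrite -sumr_const; apply: ler_sum => u uS.
by rewrite setU0 subr0; apply: Sr.
Qed.

(* The invariant of the two greedy sets: an element went to S rather than to A
   because its marginal value for S was at least the one for A. *)
Definition charged (A S : {set T}) := forall Y F : {set T},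
  Y \subset S -> A \subset F -> {in Y, forall x, x \notin F} ->
  \sum_(w in Y) (v (w |: F) - v F) <= v S.

Lemma charged0 : charged set0 set0.
Proof.
move=> Y F; rewrite subset0 => /eqP -> _ _.
by rewrite big_set0 v0.
Qed.

Lemma charged_superset (A A' S : {set T}) : A \subset A' -> charged A S -> charged A' S.
Proof. by move=> AA' chAS Y F YS A'F; apply: chAS => //; apply: subset_trans A'F. Qed.

Lemma charged_setU1 (A S : {set T}) u : charged A S ->
  v (u |: A) - v A <= v (u |: S) - v S -> 0 <= v (u |: S) - v S -> charged A (u |: S).
Proof.
move=> chAS le_gain gain_ge0 Y F YS AF YF.
have YuS : Y :\ u \subset S.
  apply/subsetP => x; rewrite !inE => /andP [xu xY].
  by move/subsetP: YS => /(_ x xY); rewrite !inE (negbTE xu).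
have sumYu : \sum_(w in Y :\ u) (v (w |: F) - v F) <= v S.
  by apply: chAS => // x; rewrite !inE => /andP [_ /YF].
have [uY|uY] := boolP (u \in Y); last first.
  have -> : Y = Y :\ u by apply/setP => x; rewrite !inE; case: eqP => // ->; rewrite (negbTE uY).
  lra.
rewrite (big_setD1 u uY) /=.
have : v (u |: F) - v F <= v (u |: A) - v A by apply: v_submod => //; apply: YF.
lra.
Qed.

End Submodular.

Lemma sumr_subset_le (R : numDomainType) (T : finType) (A A' : {set T}) (F : T -> R) :
  A \subset A' -> {in A', forall x, 0 <= F x} -> \sum_(x in A) F x <= \sum_(x in A') F x.
Proof.
move=> AA' F_ge0; rewrite [X in _ <= X](big_setID A) /= (setIidPr AA') lerDl.
by apply: sumr_ge0 => x; rewrite inE => /andP [_ /F_ge0].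
Qed.

Lemma sub_layers_cover (T : finType) (R1 R2 O R0 R3 P Q : {set T}) :
  O \subset R0 -> R3 \subset P :|: Q ->
  O \subset (R0 :\: R1) :|: ((R1 :\: R2) :|: P) :|: ((R2 :\: R3) :|: Q).
Proof.
move=> /subsetP OR0 /subsetP R3PQ; apply/subsetP => x xO; rewrite !inE (OR0 x xO) /=.
have [xR3|] := boolP (x \in R3); last by case: (x \in R1); case: (x \in R2); rewrite ?orbT.
by move: (R3PQ x xR3); rewrite inE => /orP [->|->]; rewrite ?orbT.
Qed.

Lemma setD_layers (T : finType) (O A A' A'' : {set T}) : A'' \subset A' -> A' \subset A ->
  O :&: (A :\: A'') :&: A' = O :&: (A' :\: A'') /\ O :&: (A :\: A'') :\: A' = O :&: (A :\: A').
Proof.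
move=> /subsetP A''A' /subsetP A'A; split; apply/setP => x; rewrite !inE.
all: move: (A''A' x) (A'A x); case: (x \in O); case: (x \in A); case: (x \in A'); case: (x \in A'');
  move=> //= a b; first [by move: (a isT) | by move: (b isT)].
Qed.

Lemma late_stop_ratio (R : realFieldType) (s X G r r1 : R) :
  s * s = 3 -> 1 <= s -> 0 <= X -> s * G <= r -> (1 + s) * r1 <= r -> r < X + r1 ->
  8 * X + 2 * G + 2 * ((1 + s) * r) <= (12 + 4 * s) * X.
Proof.
move=> s2 s_ge1 X_ge0 sG r1_le r_lt.
have sr : s * r <= (1 + s) * X by nra.
have s_ge0 : 0 <= s by lra.
have G3 : 3 * G <= s * r by rewrite -s2 -mulrA ler_wpM2l.
have r3 : 3 * r <= (s + 3) * X.
  have := ler_wpM2l s_ge0 sr; rewrite mulrA s2.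
  by have -> : s * ((1 + s) * X) = (s + 3) * X by rewrite mulrA mulrDr mulr1 s2.
have sX : X <= s * X by rewrite ler_peMl.
lra.
Qed.


Section Mechanism.
Variables (R : realType) (n : nat) (v : {set 'I_n} -> R) (c : 'I_n -> R) (B : R).
Variables (u0 : 'I_n) (tie : nat -> 'I_n -> bool).
Hypotheses (v0 : v set0 = 0) (v_ge0 : forall S, 0 <= v S) (v_submod : submodular_val v).
Hypotheses (c_ge0 : forall u, 0 <= c u) (B_gt0 : 0 < B).
Hypothesis u0_max : forall u, c u <= B -> v [set u] <= v [set u0].

Local Notation rho1 := (v [set u0]).
Local Notation rho_ := (rho v u0).
Local Notation step := (step v c B u0 tie).
Local Notation round := (round v c B u0 tie).
Local Notation state := (state v c B u0 tie).
Local Notation R_B := [set u | c u <= B].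

Lemma sqrt3_ge1 : 1 <= Num.sqrt (3 : R).
Proof. by have := @ler_wsqrtr R 1 3; rewrite sqrtr1; apply; lra. Qed.

Lemma alpha_ge2 : 2 <= alpha R.
Proof. rewrite /alpha; have := sqrt3_ge1; lra. Qed.

Lemma rho_ge0 t : 0 <= rho_ t.
Proof. by rewrite /rho mulr_ge0 // exprn_ge0 //; have := alpha_ge2; lra. Qed.

Lemma rho_gt0 t : 0 < rho1 -> 0 < rho_ t.
Proof. by move=> rho1_gt0; rewrite /rho mulr_gt0 // exprn_gt0 //; have := alpha_ge2; lra. Qed.

Lemma rho_1 : rho_ 1 = rho1.
Proof. by rewrite /rho expr0 mul1r. Qed.

Lemma rho_succ t : rho_ t.+2 = alpha R * rho_ t.+1.
Proof. by rewrite /rho exprS mulrA. Qed.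

Lemma rho_le a b : (a <= b)%N -> rho_ a <= rho_ b.
Proof.
move=> ab; rewrite /rho ler_wpM2r // ler_weXn2l //; last by rewrite -!subn1 leq_sub2r.
by have := alpha_ge2; lra.
Qed.

Lemma rho_geometric j : (alpha R - 1) * \sum_(0 <= i < j) rho_ i.+2 = rho_ j.+2 - rho_ 2.
Proof.
elim: j => [|j IH]; first by rewrite big_geq // mulr0 subrr.
by rewrite big_nat_recr //= mulrDr IH (rho_succ j.+1); ring.
Qed.

Lemma singleton_gain_le (S : {set 'I_n}) u : c u <= B -> u \notin S -> v (u |: S) <= v S + rho1.
Proof.
move=> cuB uS; have := v_submod (sub0set S) uS.
rewrite setU0 v0 subr0; have := u0_max cuB; lra.
Qed.

Definition price_upd (p : 'I_n -> R) u pu := fun w => if w == u then pu else p w.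

Lemma step_ended t st u : rend st -> step t st u = st.
Proof. by rewrite /Defs.step => ->. Qed.

Lemma step_spec t st u : ~~ rend st -> exists (j2 : bool) (pu : R),
  let mj := if j2 then marg v (rS2 st) u else marg v (rS1 st) u in
  let Sj := if j2 then rS2 st else rS1 st in
  let p' := price_upd (rp st) u pu in
  [/\ marg v (rS1 st) u <= mj, marg v (rS2 st) u <= mj, pu = Num.min (rp st u) (mj / (rho_ t / B)) &
      step t st u = if c u <= pu then
         if rho_ t < v (u |: Sj) then RS (rR st) p' (rS1 st) (rS2 st) true (rcost st + 4)
         else if j2 then RS (rR st) p' (rS1 st) (u |: rS2 st) false (rcost st + 4)
         else RS (rR st) p' (u |: rS1 st) (rS2 st) false (rcost st + 4)
       else RS (rR st :\ u) p' (rS1 st) (rS2 st) false (rcost st + 4)].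
Proof.
move=> not_ended; rewrite /Defs.step (negbTE not_ended).
set m1 := marg v (rS1 st) u; set m2 := marg v (rS2 st) u.
exists ((m1 < m2) || (m1 == m2) && tie t u); eexists; split; try reflexivity.
- by case: ltgtP => [/ltW|//|->] //=; rewrite if_same.
- by case: ltgtP => [//|/ltW|->] //=; rewrite if_same.
Qed.

Lemma step_subsets t st u :
  [/\ rS1 st \subset rS1 (step t st u), rS2 st \subset rS2 (step t st u),
      rS1 (step t st u) \subset u |: rS1 st & rS2 (step t st u) \subset u |: rS2 st] /\
  [/\ rR (step t st u) \subset rR st, rR st :\ u \subset rR (step t st u)
    & (rcost (step t st u) <= rcost st + 4)%N].
Proof.
have [ended|not_ended] := boolP (rend st).
  by rewrite step_ended //; split; split; rewrite ?subsetUr ?subsetDl ?leq_addr.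
have [j2 [pu [_ _ _ ->]]] := step_spec t u not_ended.
case: ifP => _; [case: ifP => _; [|case: j2] |]; split; split => //=;
  by rewrite ?subsetUr ?subsetDl ?subsetUl ?subxx // subsetD1 subxx !inE eqxx.
Qed.

Lemma steps_subsets t l st :
  [/\ rS1 st \subset rS1 (foldl (step t) st l), rS2 st \subset rS2 (foldl (step t) st l),
      rR (foldl (step t) st l) \subset rR st,
      (rcost (foldl (step t) st l) <= rcost st + 4 * size l)%N
    & (rend st -> foldl (step t) st l = st)].
Proof.
elim: l st => [|u l IH] st /=; first by rewrite addn0 !subxx.
have [[S1_sub S2_sub _ _] [R_sub _ cost_le]] := step_subsets t st u.
have [S1_sub' S2_sub' R_sub' cost_le' ended] := IH (step t st u).
split.
- exact: subset_trans S1_sub S1_sub'.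
- exact: subset_trans S2_sub S2_sub'.
- exact: subset_trans R_sub' R_sub.
- by move: cost_le cost_le'; rewrite /=; lia.
- by move=> st_ended; move: ended; rewrite step_ended //; apply.
Qed.

Record round_inv (t : nat) (R0 : {set 'I_n}) (st : rstate R n) : Prop := RoundInv {
  inv_disj : {in rS1 st, forall x, x \notin rS2 st};
  inv_S1 : rS1 st \subset rR st;
  inv_S2 : rS2 st \subset rR st;
  inv_R : rR st \subset R0;
  inv_v1 : v (rS1 st) <= rho_ t;
  inv_v2 : v (rS2 st) <= rho_ t;
  inv_price : {in rR st, forall x, c x <= rp st x};
  inv_end : rend st -> rho_ t < v (rS1 st) + rho1 \/ rho_ t < v (rS2 st) + rho1;
  (* Without [0 < rho1] all thresholds vanish and the price [mj / (rho_ t / B)] is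
     the junk value [0]. *)
  inv_greedy : 0 < rho1 ->
    [/\ charged v (rS1 st) (rS2 st), charged v (rS2 st) (rS1 st) &
        forall x (F : {set 'I_n}), x \in R0 :\: rR st ->
          rS1 st \subset F \/ rS2 st \subset F -> x \notin F -> B * marg v F x < c x * rho_ t]
}.

Definition swap_sets (st : rstate R n) := RS (rR st) (rp st) (rS2 st) (rS1 st) (rend st) (rcost st).

Lemma round_inv_swap t R0 st : round_inv t R0 st -> round_inv t R0 (swap_sets st).
Proof.
case=> disj S1R S2R RR0 v1 v2 price ended greedy; constructor => //=.
- by move=> x x2; apply/negP => /disj; rewrite x2.
- by move=> /ended [|]; [right|left].
- move=> rho1_gt0; have [ch12 ch21 rejected] := greedy rho1_gt0.
  by split => // x F xR [S2F|S1F]; apply: rejected => //; [right|left].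
Qed.

Lemma accept_price_gain_ge0 t mj pu (cu : R) : 0 < rho1 -> 0 <= cu ->
  cu <= pu -> pu <= mj / (rho_ t / B) -> 0 <= mj.
Proof.
move=> rho1_gt0 cu_ge0 cu_pu; have rhoB_gt0 : 0 < rho_ t / B by rewrite divr_gt0 ?rho_gt0.
rewrite ler_pdivlMr //; apply: le_trans; exact: mulr_ge0 (le_trans cu_ge0 cu_pu) (ltW rhoB_gt0).
Qed.

Lemma round_inv_accept2 t R0 st u pu cst : round_inv t R0 st ->
  u \in rR st -> u \notin rS1 st -> u \notin rS2 st ->
  marg v (rS1 st) u <= marg v (rS2 st) u ->
  c u <= pu -> pu <= marg v (rS2 st) u / (rho_ t / B) -> v (u |: rS2 st) <= rho_ t ->
  round_inv t R0 (RS (rR st) (price_upd (rp st) u pu) (rS1 st) (u |: rS2 st) false cst).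
Proof.
case=> disj S1R S2R RR0 v1 v2 price _ greedy uR u1 u2 le_gain cu_pu pu_le v_le.
constructor => //=.
- move=> x x1; rewrite !inE negb_or disj // andbT.
  by apply: contraNneq u1 => <-.
- by rewrite subUset sub1set uR.
- by move=> x xR; rewrite /price_upd; case: eqP => [->|_] //; apply: price.
- move=> rho1_gt0; have [ch12 ch21 rejected] := greedy rho1_gt0.
  have gain_ge0 := accept_price_gain_ge0 rho1_gt0 (c_ge0 u) cu_pu pu_le.
  split.
  + exact: charged_setU1.
  + by apply: charged_superset ch21; apply: subsetUr.
  + move=> x F xR S12F; apply: rejected => //.
    case: S12F => [S1F|S2F]; [by left | right].
    exact: subset_trans (subsetUr _ _) S2F.
Qed.

Lemma round_inv_end_early t R0 st u p' cst : round_inv t R0 st -> R0 \subset R_B ->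
  u \in rR st -> u \notin rS1 st -> u \notin rS2 st ->
  rho_ t < v (u |: rS1 st) \/ rho_ t < v (u |: rS2 st) ->
  {in rR st, forall x, c x <= p' x} ->
  round_inv t R0 (RS (rR st) p' (rS1 st) (rS2 st) true cst).
Proof.
case=> disj S1R S2R RR0 v1 v2 _ _ greedy R0B uR u1 u2 too_big price.
have cuB : c u <= B by have := subsetP R0B u (subsetP RR0 u uR); rewrite inE.
constructor => //= _.
by case: too_big => big; [left | right]; apply: (lt_le_trans big); apply: singleton_gain_le.
Qed.

Lemma reject_price_gain_lt t mj p (cu : R) : 0 < rho1 ->
  ~~ (cu <= Num.min p (mj / (rho_ t / B))) -> cu <= p -> B * mj < cu * rho_ t.
Proof.
move=> rho1_gt0; rewrite -ltNge gt_min => /orP [|lt_cu _]; first lra.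
have rhoB_gt0 : 0 < rho_ t / B by rewrite divr_gt0 ?rho_gt0.
rewrite ltr_pdivrMr // -(ltr_pM2l B_gt0) in lt_cu.
suff -> : cu * rho_ t = B * (cu * (rho_ t / B)) by [].
by field; rewrite gt_eqF.
Qed.

Lemma round_inv_reject t R0 st u mj pu cst : round_inv t R0 st ->
  u \in rR st -> u \notin rS1 st -> u \notin rS2 st ->
  marg v (rS1 st) u <= mj -> marg v (rS2 st) u <= mj ->
  pu = Num.min (rp st u) (mj / (rho_ t / B)) -> ~~ (c u <= pu) ->
  round_inv t R0 (RS (rR st :\ u) (price_upd (rp st) u pu) (rS1 st) (rS2 st) false cst).
Proof.
case=> disj S1R S2R RR0 v1 v2 price _ greedy uR u1 u2 le1 le2 -> rejected_u.
constructor => //=.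
- by rewrite subsetD1 S1R.
- by rewrite subsetD1 S2R.
- exact: subset_trans (subD1set _ _) RR0.
- by move=> x; rewrite !inE /price_upd => /andP [/negbTE -> /price].
- move=> rho1_gt0; have [ch12 ch21 rejected] := greedy rho1_gt0.
  split => // x F; rewrite !inE negb_and negbK => /andP [/orP [/eqP -> | xR] xR0] S12F xF;
    last by apply: rejected => //; rewrite !inE xR.
  have gain_lt := reject_price_gain_lt rho1_gt0 rejected_u (price u uR).
  apply: le_lt_trans gain_lt; rewrite ler_pM2l //.
  by case: S12F => SF; apply: le_trans (v_submod SF xF) _.
Qed.

Lemma step_round_inv t R0 st u : round_inv t R0 st -> R0 \subset R_B ->
  u \in rR st -> u \notin rS1 st -> u \notin rS2 st -> round_inv t R0 (step t st u).
Proof.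
move=> inv R0B uR u1 u2.
have [ended|not_ended] := boolP (rend st); first by rewrite step_ended.
have /= [j2 [pu [le1 le2 pu_def ->]]] := step_spec t u not_ended.
case: ifP => [cu_pu|/negbT rejected_u].
  2: exact: round_inv_reject inv uR u1 u2 le1 le2 pu_def rejected_u.
have price' : {in rR st, forall x, c x <= price_upd (rp st) u pu x}.
  by move=> x xR; rewrite /price_upd; case: eqP => [->|_] //; apply: (inv_price inv).
case: ifP => [big|/negbT].
  apply: round_inv_end_early inv R0B uR u1 u2 _ price'.
  by case: j2 big {le1 le2 pu_def}; [right|left].
have pu_le : pu <= (if j2 then marg v (rS2 st) u else marg v (rS1 st) u) / (rho_ t / B).
  by rewrite pu_def ge_min lexx orbT.
rewrite -leNgt; case: j2 le1 le2 pu_le {pu_def price'} => le1 le2 pu_le small.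
- exact: round_inv_accept2.
- have := round_inv_accept2 (rcost st + 4) (round_inv_swap inv) uR u2 u1 le2 cu_pu pu_le small.
  exact: round_inv_swap.
Qed.

Lemma steps_round_inv t (R0 : {set 'I_n}) l st : R0 \subset R_B -> uniq l -> round_inv t R0 st ->
  (forall u, u \in l -> [/\ u \in rR st, u \notin rS1 st & u \notin rS2 st]) ->
  round_inv t R0 (foldl (step t) st l).
Proof.
move=> R0B; elim: l st => [|u l IH] st //= /andP [ul uniq_l] inv todo.
have [uR u1 u2] := todo u (mem_head _ _).
apply: IH => //; first exact: step_round_inv.
move=> w wl; have [wR w1 w2] : [/\ w \in rR st, w \notin rS1 st & w \notin rS2 st].
  by apply: todo; rewrite inE wl orbT.
have wu : w != u by apply: contraNneq ul => <-.
have [[_ _ S1_sub S2_sub] [_ R_sup _]] := step_subsets t st u.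
split.
- by apply: (subsetP R_sup); rewrite !inE wu.
- by apply: contraNN w1 => /(subsetP S1_sub); rewrite !inE (negbTE wu).
- by apply: contraNN w2 => /(subsetP S2_sub); rewrite !inE (negbTE wu).
Qed.

Lemma step_settled t st u : ~~ rend (step t st u) ->
  u \notin rR (step t st u) \/ u \in rS1 (step t st u) :|: rS2 (step t st u).
Proof.
have [ended|not_ended] := boolP (rend st); first by rewrite step_ended // ended.
have /= [j2 [pu [_ _ _ ->]]] := step_spec t u not_ended.
case: ifP => _; [case: ifP => _; [|case: j2] |] => //= _.
- by right; rewrite !inE eqxx orbT.
- by right; rewrite !inE eqxx.
- by left; rewrite !inE eqxx.
Qed.

Lemma steps_settled t l st : ~~ rend (foldl (step t) st l) ->
  {in l, forall u, u \notin rR (foldl (step t) st l) \/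
                   u \in rS1 (foldl (step t) st l) :|: rS2 (foldl (step t) st l)}.
Proof.
elim: l st => [|w l IH] st //= not_ended u; rewrite inE => /predU1P [->|ul]; last exact: IH.
have [S1_sub S2_sub R_sub _ ended] := steps_subsets t l (step t st w).
have not_ended_w : ~~ rend (step t st w) by apply: contraNN not_ended => w_ended; rewrite ended.
case: (step_settled not_ended_w) => [wR|].
  by left; apply: contraNN wR => /(subsetP R_sub).
by rewrite !inE => /orP [/(subsetP S1_sub) ->|/(subsetP S2_sub) ->]; right; rewrite ?orbT.
Qed.

Definition round_todo (ms : mstate R n) :=
  [seq u <- enum 'I_n | u \in mR ms :\: (mcur1 ms :|: mcur2 ms)].
Definition round_start (ms : mstate R n) := RS (mR ms) (mp ms) set0 set0 false (mcost ms).
Definition round_run t (ms : mstate R n) := foldl (step t) (round_start ms) (round_todo ms).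
Definition round_result (ms : mstate R n) :=
  RS (mR ms) (mp ms) (mcur1 ms) (mcur2 ms) false (mcost ms).

Lemma roundE t ms : round t ms = MS (rR (round_run t ms)) (rp (round_run t ms))
  (mcur1 ms) (mcur2 ms) (rS1 (round_run t ms)) (rS2 (round_run t ms)) (rcost (round_run t ms)).
Proof. by []. Qed.

Definition prices_ok (ms : mstate R n) :=
  mR ms \subset R_B /\ {in mR ms, forall x, c x <= mp ms x}.

Lemma round_run_inv t ms : prices_ok ms -> round_inv t (mR ms) (round_run t ms).
Proof.
move=> [RB price]; apply: steps_round_inv => //.
- by rewrite filter_uniq // enum_uniq.
- constructor; rewrite //= ?sub0set ?v0 ?rho_ge0 ?setDv //; first by move=> x; rewrite inE.
  by move=> _; split; [exact: charged0 | exact: charged0 | move=> x F; rewrite inE].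
- by move=> u; rewrite mem_filter !inE => /andP [/andP [_ uR] _].
Qed.

Lemma round_inv_result t ms : prices_ok ms -> round_inv t (mR ms) (round_result (round t ms)).
Proof.
move=> ok; have [disj S1R S2R RR0 v1 v2 price _ greedy] := round_run_inv t ok.
by constructor.
Qed.

Definition settled (ms : mstate R n) :=
  mR ms :\: (mprev1 ms :|: mprev2 ms :|: mcur1 ms :|: mcur2 ms) == set0.

Lemma unsettled_round_ended t ms : prices_ok ms -> ~~ settled (round t ms) ->
  rho_ t < v (mcur1 (round t ms)) + rho1 \/ rho_ t < v (mcur2 (round t ms)) + rho1.
Proof.
move=> ok; rewrite roundE /settled /=.
have [ended|not_ended] := boolP (rend (round_run t ms)).
  by move=> _; apply: (inv_end (round_run_inv t ok)).
case/negP; apply/eqP/setP => x; rewrite !inE; apply/negP => /andP [].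
rewrite !negb_or => /andP [/andP [/andP [x1 x2] x1'] x2'] xR.
have [_ _ R_sub _ _] := steps_subsets t (round_todo ms) (round_start ms).
have xt : x \in round_todo ms.
  by rewrite mem_filter mem_enum !inE negb_or x1 x2 (subsetP R_sub).
case: (steps_settled not_ended xt) => [|]; first by rewrite xR.
by rewrite !inE (negbTE x1') (negbTE x2').
Qed.

Lemma round_cost t ms : (mcost (round t ms) <= mcost ms + 4 * n)%N.
Proof.
have [_ _ _ cost_le _] := steps_subsets t (round_todo ms) (round_start ms).
rewrite roundE (leq_trans cost_le) // leq_add2l leq_mul2l /= size_filter.
by rewrite (leq_trans (count_size _ _)) // size_enum_ord.
Qed.

Lemma state_prices_ok k : prices_ok (state k).
Proof.
elim: k => [|k [RB price]]; first by split => //= x; rewrite inE.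
have [_ _ _ RR0 _ _ price' _ _] := round_inv_result k.+2 (conj RB price).
by split => //; apply: subset_trans RR0 RB.
Qed.

Lemma state_round_inv k : round_inv k.+2 (mR (state k)) (round_result (state k.+1)).
Proof. exact: round_inv_result (state_prices_ok k). Qed.

Lemma state_cost k : (mcost (state k) <= #|R_B| + 4 * n * k)%N.
Proof.
elim: k => [|k IH]; first by rewrite muln0 addn0.
change (state k.+1) with (round k.+2 (state k)).
by have := round_cost k.+2 (state k); rewrite mulnS; lia.
Qed.

Lemma state_R_le i j : (i <= j)%N -> mR (state j) \subset mR (state i).
Proof.
move=> /subnK <-; elim: (j - i)%N => [|d IH]; first exact: subxx.
exact: subset_trans (inv_R (state_round_inv _)) IH.
Qed.

Lemma state_set_le k (S : {set 'I_n}) : S \subset mR (state k) -> v S <= rho1 *+ n.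
Proof.
move=> SR; apply: (le_trans (submod_le_card v0 v_submod (r := rho1) _)).
  move=> u /(subsetP SR) /(subsetP (proj1 (state_prices_ok k))).
  by rewrite inE; apply: u0_max.
by apply: ler_wpMn2l; rewrite ?v_ge0 // (leq_trans (max_card _)) // card_ord.
Qed.

Lemma stops_by_log : stops v c B u0 tie (trunc_log 2 n).+1.
Proof.
set L := trunc_log 2 n; apply/negPn/negP => not_settled.
have ended := @unsettled_round_ended L.+2 _ (state_prices_ok L) not_settled.
have inv := state_round_inv L.
have v1 : v (mcur1 (state L.+1)) <= rho1 *+ n by apply: (state_set_le (inv_S1 inv)).
have v2 : v (mcur2 (state L.+1)) <= rho1 *+ n by apply: (state_set_le (inv_S2 inv)).
have pow_ge : (n.+1)%:R <= alpha R ^+ L.+1.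
  apply: le_trans (_ : (2 ^ L.+1)%:R <= _); first by rewrite ler_nat trunc_log_ltn.
  by rewrite natrX lerXn2r ?nnegrE ?ler0n ?alpha_ge2 //; have := alpha_ge2; lra.
have rho_ge : rho1 *+ n + rho1 <= rho_ L.+2.
  by rewrite -mulrSr -mulr_natl /rho /= ler_wpM2r ?v_ge0.
by case: ended; lra.
Qed.

Lemma cost_of_ge0 (A : {set 'I_n}) : 0 <= cost_of c A.
Proof. exact: sumr_ge0. Qed.

Lemma cost_of_subset (A A' : {set 'I_n}) : A \subset A' -> cost_of c A <= cost_of c A'.
Proof. by move=> AA'; apply: sumr_subset_le. Qed.

Lemma gain_le_rejected (S W Z : {set 'I_n}) (r : R) : 0 <= r -> {in Z, forall x, x \notin S} ->
  {in Z, forall x, B * marg v S x < c x * r} ->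
  v (S :|: W) <= v S + \sum_(u in W :\: S :\: Z) marg v S u + r * (cost_of c (W :&: Z) / B).
Proof.
move=> r_ge0 ZS Z_gain.
have -> : S :|: W = S :|: (W :\: S) by rewrite setDE setUIr setUCr setIT.
apply: le_trans (submod_sum_le v_submod _ _) _.
rewrite (big_setID Z) /= -addrA lerD2l addrC lerD2l.
apply: (@le_trans _ _ (\sum_(u in W :&: Z) c u * r / B)); last first.
  by rewrite /cost_of mulr_suml mulrC mulr_suml; apply: ler_sum => u _; rewrite mulrAC.
apply: (@le_trans _ _ (\sum_(u in (W :\: S) :&: Z) c u * r / B)).
  apply: ler_sum => u; rewrite !inE => /andP [_ uZ].
  by rewrite ler_pdivlMr // mulrC ltW ?Z_gain.
apply: sumr_subset_le => [|u _]; last by apply: divr_ge0; [apply: mulr_ge0 | apply: ltW].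
by apply: setSI; apply: subsetDl.
Qed.

Section RoundValue.
Variables (t : nat) (R0 : {set 'I_n}) (ms : mstate R n).
Hypotheses (rho1_gt0 : 0 < rho1) (inv : round_inv t R0 (round_result ms)).
Local Notation S1 := (mcur1 ms).
Local Notation S2 := (mcur2 ms).
Local Notation Z := (R0 :\: mR ms).

Lemma round_value_le (W : {set 'I_n}) :
  v W <= v S1 + v S2 + \sum_(u in W :\: S1 :\: Z) marg v S1 u
    + \sum_(u in W :\: S2 :\: Z) marg v S2 u + 2 * (rho_ t * (cost_of c (W :&: Z) / B)).
Proof.
have [disj S1R S2R _ _ _ _ _ greedy] := inv; have [_ _ rejected] := greedy rho1_gt0.
have ZS (S : {set 'I_n}) : S \subset mR ms -> {in Z, forall x, x \notin S}.
  by move=> SR x; rewrite inE => /andP [xR _]; apply: contraNN xR => /(subsetP SR).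
have gain1 := gain_le_rejected W (rho_ge0 t) (ZS _ S1R)
  (fun x xZ => rejected x S1 xZ (or_introl (subxx _)) (ZS _ S1R x xZ)).
have gain2 := gain_le_rejected W (rho_ge0 t) (ZS _ S2R)
  (fun x xZ => rejected x S2 xZ (or_intror (subxx _)) (ZS _ S2R x xZ)).
have := submod_le_split v_ge0 v_submod W disj; rewrite !(setUC W); lra.
Qed.

Lemma round_value_le_settled (W : {set 'I_n}) : W \subset Z :|: (S1 :|: S2) ->
  v W <= 2 * (v S1 + v S2) + 2 * (rho_ t * (cost_of c (W :&: Z) / B)).
Proof.
move=> WZS; have [_ _ _ _ _ _ _ _ greedy] := inv; have [ch12 ch21 _] := greedy rho1_gt0.
have sum1 : \sum_(u in W :\: S1 :\: Z) marg v S1 u <= v S2.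
  apply: ch12 => // [|x]; last by rewrite !inE => /andP [_ /andP []].
  apply/subsetP => x; rewrite !inE => /andP [xZ /andP [x1 xW]].
  by move/subsetP: WZS => /(_ x xW); rewrite !inE (negbTE x1) (negbTE xZ).
have sum2 : \sum_(u in W :\: S2 :\: Z) marg v S2 u <= v S1.
  apply: ch21 => // [|x]; last by rewrite !inE => /andP [_ /andP []].
  apply/subsetP => x; rewrite !inE => /andP [xZ /andP [x2 xW]].
  by move/subsetP: WZS => /(_ x xW); rewrite !inE (negbTE x2) (negbTE xZ) orbF.
have := round_value_le W; lra.
Qed.

Lemma round_value_le_rejected (W : {set 'I_n}) : W \subset Z ->
  v W <= 2 * rho_ t + 2 * (rho_ t * (cost_of c W / B)).
Proof.
move=> WZ; have := round_value_le W; have [_ _ _ _ v1 v2 _ _ _] := inv.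
have no_rest (S : {set 'I_n}) : W :\: S :\: Z = set0.
  apply/setP => x; rewrite !inE.
  by case: (boolP (x \in W)) => [/(subsetP WZ)|]; rewrite ?inE ?andbF // => ->.
rewrite !no_rest !big_set0 (setIidPl WZ); lra.
Qed.

End RoundValue.

Definition rejected k := mR (state k) :\: mR (state k.+1).

Lemma rejected_value_le k (O : {set 'I_n}) : 0 < rho1 ->
  v (O :&: rejected k) <= 2 * rho_ k.+2 + 2 * (rho_ k.+2 * (cost_of c (O :&: rejected k) / B)).
Proof.
by move=> rho1_gt0; have := round_value_le_rejected rho1_gt0 (state_round_inv k) (subsetIr O _).
Qed.

Lemma settled_value_le k (O : {set 'I_n}) : 0 < rho1 ->
  v (O :&: (rejected k :|: (mcur1 (state k.+1) :|: mcur2 (state k.+1)))) <=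
  2 * (v (mcur1 (state k.+1)) + v (mcur2 (state k.+1)))
    + 2 * (rho_ k.+2 * (cost_of c (O :&: rejected k) / B)).
Proof.
move=> rho1_gt0.
apply: le_trans (round_value_le_settled rho1_gt0 (state_round_inv k) (subsetIr _ _)) _.
rewrite lerD2l !ler_pM2l // ?rho_gt0 // ler_pM2r ?invr_gt0 //; apply: cost_of_subset.
by apply/subsetP => x; rewrite !inE => /andP [/andP [-> _] ->].
Qed.

Lemma rejected_value_sum (O : {set 'I_n}) j :
  v (O :&: (mR (state 0) :\: mR (state j))) <= \sum_(0 <= i < j) v (O :&: rejected i).
Proof.
elim: j => [|j IH]; first by rewrite setDv setI0 v0 big_geq.
have [layer_in layer_out] := setD_layers O (state_R_le (leqnSn j)) (state_R_le (leq0n j)).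
rewrite -(setID (O :&: (mR (state 0) :\: mR (state j.+1))) (mR (state j))) layer_in layer_out.
rewrite big_nat_recr //=; have := submod_subadditive v_ge0 v_submod
  (O :&: rejected j) (O :&: (mR (state 0) :\: mR (state j))); rewrite /rejected; lra.
Qed.

Lemma rejected_cost_sum (O : {set 'I_n}) j :
  \sum_(0 <= i < j) cost_of c (O :&: rejected i) =
  cost_of c (O :&: (mR (state 0) :\: mR (state j))).
Proof.
elim: j => [|j IH]; first by rewrite setDv setI0 big_geq // /cost_of big_set0.
have [layer_in layer_out] := setD_layers O (state_R_le (leqnSn j)) (state_R_le (leq0n j)).
rewrite big_nat_recr // IH /cost_of [in RHS](big_setID (mR (state j))) layer_in layer_out.
exact: addrC.
Qed.

Lemma weighted_rejected_cost_le (O : {set 'I_n}) j : cost_of c O <= B ->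
  \sum_(0 <= i < j) rho_ i.+2 * (cost_of c (O :&: rejected i) / B) <= rho_ j.+1.
Proof.
move=> O_feasible.
apply: (@le_trans _ _ (\sum_(0 <= i < j) rho_ j.+1 * (cost_of c (O :&: rejected i) / B))).
  apply: ler_sum_nat => i /andP [_ lt_ij]; apply: ler_wpM2r; last exact: rho_le.
  by rewrite divr_ge0 ?cost_of_ge0 ?ltW.
rewrite -mulr_sumr -mulr_suml rejected_cost_sum ler_piMr ?rho_ge0 // ler_pdivrMr // mul1r.
by apply: le_trans O_feasible; apply: cost_of_subset; apply: subsetIl.
Qed.

Lemma budget_feasible_sub (O : {set 'I_n}) : cost_of c O <= B -> O \subset mR (state 0).
Proof.
move=> O_feasible; apply/subsetP => x xO; rewrite inE; apply: le_trans O_feasible.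
by rewrite /cost_of (bigD1 x) //= lerDl sumr_ge0.
Qed.

Lemma better_ge (A A' : {set 'I_n}) : v A <= v (better v A A') /\ v A' <= v (better v A A').
Proof. by rewrite /better; case: ltP => ?; split => //; apply: ltW. Qed.

Lemma output_ge (ms : mstate R n) :
  [/\ v (mprev1 ms) <= v (output v ms), v (mprev2 ms) <= v (output v ms),
      v (mcur1 ms) <= v (output v ms) & v (mcur2 ms) <= v (output v ms)].
Proof.
rewrite /output /=; set b1 := better v (mprev1 ms) (mprev2 ms); set b2 := better v b1 (mcur1 ms).
have [h1 h2] := better_ge (mprev1 ms) (mprev2 ms).
have [h3 h4] := better_ge b1 (mcur1 ms).
have [h5 h6] := better_ge b2 (mcur2 ms).
split; lra.
Qed.

Lemma stops_settled K (ms := state K) : stops v c B u0 tie K ->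
  mR ms \subset (mprev1 ms :|: mprev2 ms) :|: (mcur1 ms :|: mcur2 ms).
Proof. by rewrite /stops setD_eq0 !setUA. Qed.

Lemma feasible_le0 (O : {set 'I_n}) : rho1 <= 0 -> cost_of c O <= B -> v O <= 0.
Proof.
move=> rho1_le0 /budget_feasible_sub /subsetP OR0.
apply: le_trans (submod_le_card v0 v_submod (r := rho1) _) _.
  by move=> u /OR0; rewrite inE; apply: u0_max.
by rewrite -mulr_natr mulr_le0_ge0.
Qed.

Lemma feasible_le_first_stop (O : {set 'I_n}) :
  0 < rho1 -> cost_of c O <= B -> stops v c B u0 tie 1 ->
  v O <= 5 * v (output v (state 1)) + 2 * rho_ 2.
Proof.
move=> rho1_gt0 O_feasible stop.
have [prev_le _ cur1_le cur2_le] := output_ge (state 1).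
set X := v (output v (state 1)) in prev_le cur1_le cur2_le *.
have := sub_layers_cover (mR (state 0)) (mR (state 0))
  (budget_feasible_sub O_feasible) (stops_settled stop).
have -> : mprev1 (state 1) :|: mprev2 (state 1) = [set u0] by exact: setU0.
rewrite setDv !set0U => /setIidPl <-; rewrite setIUr.
have u0_le : v (O :&: [set u0]) <= X.
  have := subsetIr O [set u0]; rewrite subset1 => /orP [] /eqP ->; last by rewrite v0 /X v_ge0.
  exact: prev_le.
have := settled_value_le 0 O rho1_gt0; have := weighted_rejected_cost_le 1 O_feasible.
rewrite big_nat1; have := submod_subadditive v_ge0 v_submod (O :&: [set u0])
  (O :&: (rejected 0 :|: (mcur1 (state 1) :|: mcur2 (state 1)))).
rewrite /rejected; lra.
Qed.

Lemma feasible_le_late_stop j (O : {set 'I_n}) : 0 < rho1 -> cost_of c O <= B ->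
  stops v c B u0 tie j.+2 ->
  v O <= 8 * v (output v (state j.+2)) + 2 * \sum_(0 <= i < j) rho_ i.+2 + 2 * rho_ j.+3.
Proof.
move=> rho1_gt0 O_feasible stop.
have [prev1_le prev2_le cur1_le cur2_le] := output_ge (state j.+2).
set X := v (output v (state j.+2)) in prev1_le prev2_le cur1_le cur2_le *.
have := sub_layers_cover (mR (state j)) (mR (state j.+1))
  (budget_feasible_sub O_feasible) (stops_settled stop).
move=> /setIidPl <-; rewrite setIUr [O :&: (_ :|: _)]setIUr.
set A := O :&: _; set A' := O :&: (_ :|: (mprev1 _ :|: _)).
set A'' := O :&: (_ :|: (mcur1 _ :|: _)).
have rejected_le := rejected_value_sum O j.
have rejected_sum_le : \sum_(0 <= i < j) v (O :&: rejected i) <=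
    2 * \sum_(0 <= i < j) rho_ i.+2
    + 2 * \sum_(0 <= i < j) rho_ i.+2 * (cost_of c (O :&: rejected i) / B).
  by rewrite !mulr_sumr -big_split; apply: ler_sum_nat => i _; apply: rejected_value_le.
have A'_le := settled_value_le j O rho1_gt0.
have A''_le := settled_value_le j.+1 O rho1_gt0.
have := weighted_rejected_cost_le j.+2 O_feasible; rewrite !big_nat_recr //=.
have := submod_subadditive v_ge0 v_submod A A'.
have := submod_subadditive v_ge0 v_submod (A :|: A') A''.
rewrite /A /A' /A'' /rejected in rejected_le A'_le A''_le *; lra.
Qed.

Lemma feasible_le_output K (O : {set 'I_n}) : (0 < K)%N -> stops v c B u0 tie K ->
  (forall k, (0 < k)%N -> (k < K)%N -> ~~ stops v c B u0 tie k) -> cost_of c O <= B ->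
  v O <= (12 + 4 * Num.sqrt 3) * v (output v (state K)).
Proof.
move=> K_gt0 stop not_stop O_feasible.
have [prev1_le _ _ _] := output_ge (state K).
have s_ge1 := sqrt3_ge1; have X_ge0 := v_ge0 (output v (state K)).
have [rho1_gt0|rho1_le0] := ltrP 0 rho1; last first.
  by apply: le_trans (feasible_le0 rho1_le0 O_feasible) _; apply: mulr_ge0 => //; lra.
case: K K_gt0 stop not_stop prev1_le X_ge0 => [//|[|j]] _ stop not_stop prev1_le X_ge0.
- have := feasible_le_first_stop rho1_gt0 O_feasible stop.
  rewrite rho_succ rho_1 /alpha; set s := Num.sqrt 3 in s_ge1 *.
  have : s * rho1 <= s * v (output v (state 1)) by rewrite ler_wpM2l //; lra.
  have : 0 <= s * v (output v (state 1)) by rewrite mulr_ge0 //; lra.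
  change (mprev1 (state 1)) with [set u0] in prev1_le; lra.
- have := feasible_le_late_stop rho1_gt0 O_feasible stop.
  have [le1 le2 _ _] := output_ge (state j.+2).
  have ended : rho_ j.+2 < v (mprev1 (state j.+2)) + rho1 \/
               rho_ j.+2 < v (mprev2 (state j.+2)) + rho1.
    exact: unsettled_round_ended (state_prices_ok j) (not_stop j.+1 isT (ltnSn _)).
  have geo := rho_geometric j; rewrite /alpha in geo; have := rho_le (isT : (2 <= j.+2)%N).
  rewrite (rho_succ j.+1) (rho_succ 0) rho_1 /alpha.
  set s := Num.sqrt 3 in s_ge1 geo *; set X := v (output v (state j.+2)) in le1 le2 X_ge0 *.
  set G := \sum_(0 <= i < j) _ in geo *; set r := rho_ j.+2 in ended geo *.
  have s2 : s * s = 3 by rewrite -expr2 sqr_sqrtr.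
  have sG : s * G <= r by have := rho_ge0 2; lra.
  move=> rho2_le O_le; apply: le_trans O_le _; apply: late_stop_ratio sG rho2_le _ => //.
  by case: ended; lra.
Qed.

Lemma total_cost_le K : (K <= (trunc_log 2 n).+1)%N ->
  (total_cost (state K) <= 9 * n * (trunc_log 2 n).+1)%N.
Proof.
move=> K_le; have := state_cost K; rewrite /total_cost.
have card_le : (#|R_B| <= n)%N by rewrite (leq_trans (max_card _)) // card_ord.
have n_gt0 : (0 < n)%N := leq_ltn_trans (leq0n u0) (ltn_ord u0).
nia.
Qed.

End Mechanism.

Theorem theorem5p4 :
  exists C : nat,
  forall (R : realType) (n : nat) (v : {set 'I_n} -> R) (c : 'I_n -> R) (B : R)
         (u0 : 'I_n) (tie : nat -> 'I_n -> bool),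
    v set0 = 0 ->
    (forall S, 0 <= v S) ->
    submodular_val v ->
    (forall u, 0 <= c u) ->
    0 < B ->
    c u0 <= B ->
    (forall u, c u <= B -> v [set u] <= v [set u0]) ->
    exists k : nat,
      [/\ (0 < k)%N,
          stops v c B u0 tie k,
          (forall k', (0 < k')%N -> (k' < k)%N -> ~~ stops v c B u0 tie k'),
          (forall O : {set 'I_n}, cost_of c O <= B ->
             v O / (12 + 4 * Num.sqrt 3) <= v (output v (state v c B u0 tie k)))
        & (total_cost (state v c B u0 tie k) <= C * n * (trunc_log 2 n).+1)%N].
Proof.
exists 9%N => R n v c B u0 tie v0 v_ge0 v_submod c_ge0 B_gt0 _ u0_max.
have stop_log := stops_by_log tie v0 v_ge0 v_submod c_ge0 B_gt0 u0_max.
have [|K /andP [K_gt0 stop] K_min] := ex_minnP (P := fun k => (0 < k)%N && stops v c B u0 tie k).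
  by exists (trunc_log 2 n).+1; rewrite stop_log.
have not_stop k : (0 < k)%N -> (k < K)%N -> ~~ stops v c B u0 tie k.
  by move=> k_gt0; apply: contraTN => stop_k; rewrite -leqNgt K_min ?k_gt0.
exists K; split => //.
- move=> O O_feasible; rewrite ler_pdivrMr; last by have := sqrt3_ge1 R; lra.
  by rewrite mulrC; apply: (feasible_le_output v0 v_ge0 v_submod c_ge0 B_gt0 u0_max).
- by apply/(total_cost_le _ _ _ _ B_gt0)/K_min; rewrite stop_log.
Qed.
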